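(* Fix $y>0$ and $0\le p_1'<p_1''\le y$, and suppose Assumptions 1 (with $U_0$ strictly increasing) and 2 hold. Suppose good 1 is chosen at the initial price, i.e. $q_1(p_1',y)>0$, and let $p^{10}$ be the (unique) price with $U_1(y-p^{10})=U_0(y)$. Let $\overline{p_1}$ be the minimum price $p_1\in[0,y]$ with $q_1(p_1,y)=0$. Then $\overline{p_1}\le p^{10}$. If in addition Assumption 3 holds, then $\overline{p_1}=p^{10}$.
   Context: Two goods, $0$ (price $0$) and $1$ (price $p_1\ge0$). All consumers have common income $y>0$, choose one good and spend the remainder on a numeraire. All consumers share utility functions $U_0:(0,\infty)\to[0,\infty)$ and $U_1:[0,\infty)\to[0,\infty)$ of the numeraire amount. Each consumer has an attention-price threshold $t\in(0,\infty]$, with population CDF $G$; a consumer considers good 1 at price $p_1$ iff $p_1<t$ (good 0 always considered) and chooses good 1 iff she considers it and $U_0(y)<U_1(y-p_1)$. Thus $q_{1}(p_{1},y)=\mathbb{1}\{U_{0}(y)<U_{1}(y-p_{1})\}\,(1-G(p_{1}))$ is the population choice probability of good 1. Assumption 1: (i) $U_0$ strictly increasing, $U_1$ continuous and strictly increasing; (ii) for every $y>0$ there is $\bar p_1\in[0,y]$ with $U_0(y)\ge U_1(y-\bar p_1)$. Assumption 2: $G(0)=0$. Assumption 3: $G(t)<1$ for all finite $t$. *)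

From Stdlib Require Import Reals Lra.
Open Scope R_scope.

Definition q1 (U0 U1 G : R -> R) (p1 y : R) : R :=
  (if Rlt_dec (U0 y) (U1 (y - p1)) then 1 else 0) * (1 - G p1).

(* G is the CDF of the attention threshold t in (0, +oo]:
   G x = Pr(t <= x) for finite x; values in [0,1], nondecreasing,
   right-continuous.  (Mass may sit at t = +oo, so G need not tend to 1.) *)
Definition is_threshold_cdf (G : R -> R) : Prop :=
  (forall x, 0 <= G x <= 1) /\
  (forall a b, a <= b -> G a <= G b) /\
  (forall x eps, 0 < eps -> exists delta, 0 < delta /\
      forall z, x <= z < x + delta -> Rabs (G z - G x) < eps).

Definition continuous_on_nonneg (f : R -> R) : Prop :=
  forall x, 0 <= x -> forall eps, 0 < eps -> exists delta, 0 < delta /\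
    forall z, 0 <= z -> Rabs (z - x) < delta -> Rabs (f z - f x) < eps.

Definition Assumption1 (U0 U1 : R -> R) : Prop :=
  (forall x, 0 < x -> 0 <= U0 x) /\
  (forall x, 0 <= x -> 0 <= U1 x) /\
  (forall a b, 0 < a -> a < b -> U0 a < U0 b) /\
  continuous_on_nonneg U1 /\
  (forall a b, 0 <= a -> a < b -> U1 a < U1 b) /\
  (forall y, 0 < y -> exists pbar, 0 <= pbar <= y /\ U1 (y - pbar) <= U0 y).

Definition Assumption2 (G : R -> R) : Prop := G 0 = 0.

Definition Assumption3 (G : R -> R) : Prop := forall t, G t < 1.

Definition is_min_zero_price (U0 U1 G : R -> R) (y pbar : R) : Prop :=
  (0 <= pbar <= y /\ q1 U0 U1 G pbar y = 0) /\
  (forall p, 0 <= p <= y -> q1 U0 U1 G p y = 0 -> pbar <= p).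

(* The price p10 makes the consumer indifferent, so good 1 is not chosen
   there and pbar <= p10; and p10 >= 0 because good 1 is chosen at p1' >= 0.
   If nobody ignores good 1 entirely (G < 1), a zero choice probability at
   pbar can only come from U1 (y - pbar) <= U0 y = U1 (y - p10), and strict
   monotonicity of U1 then forces p10 <= pbar. *)
From Stdlib Require Import Reals Lra.
Open Scope R_scope.

Section StrictlyIncreasingOnNonneg.

Variable f : R -> R.
Hypothesis f_incr : forall a b, 0 <= a -> a < b -> f a < f b.

Lemma le_of_incr_nonneg (a b : R) : 0 <= b -> f a <= f b -> a <= b.
Proof.
  intros Hb Hf.
  destruct (Rle_or_lt a b) as [Hab | Hba]; [exact Hab |].
  pose proof (f_incr b a Hb Hba); lra.
Qed.

End StrictlyIncreasingOnNonneg.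

Section ChoiceProbability.

Variables (U0 U1 G : R -> R) (y : R).

Lemma q1_eq0_of_not_preferred (p : R) :
  ~ U0 y < U1 (y - p) -> q1 U0 U1 G p y = 0.
Proof.
  intros Hnp; unfold q1.
  destruct (Rlt_dec (U0 y) (U1 (y - p))); [contradiction | ring].
Qed.

Lemma preferred_of_q1_pos (p : R) :
  0 < q1 U0 U1 G p y -> U0 y < U1 (y - p).
Proof.
  intros Hq.
  destruct (Rlt_dec (U0 y) (U1 (y - p))) as [Hp | Hnp]; [exact Hp |].
  rewrite (q1_eq0_of_not_preferred p Hnp) in Hq; lra.
Qed.

Lemma not_preferred_of_q1_eq0 (p : R) :
  G p < 1 -> q1 U0 U1 G p y = 0 -> U1 (y - p) <= U0 y.
Proof.
  unfold q1; intros HG Hq.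
  destruct (Rlt_dec (U0 y) (U1 (y - p))); lra.
Qed.

End ChoiceProbability.

Theorem lemma2 (U0 U1 G : R -> R) (y p1' p1'' p10 pbar : R) :
  0 < y -> 0 <= p1' -> p1' < p1'' -> p1'' <= y ->
  Assumption1 U0 U1 -> is_threshold_cdf G -> Assumption2 G ->
  0 < q1 U0 U1 G p1' y ->
  0 <= y - p10 -> U1 (y - p10) = U0 y ->
  is_min_zero_price U0 U1 G y pbar ->
  pbar <= p10 /\ (Assumption3 G -> pbar = p10).
Proof.
  intros _ Hp1' Hp1'' Hp1''y (_ & _ & _ & _ & U1_incr & _) _ _ Hq Hp10 Hindiff
    [[Hpbar Hqpbar] Hmin].
  assert (Hp1'_le : p1' <= p10).
  { enough (y - p10 <= y - p1') by lra.
    apply (le_of_incr_nonneg U1 U1_incr); [lra |].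
    pose proof (preferred_of_q1_pos U0 U1 G y p1' Hq); lra. }
  assert (Hpbar_le : pbar <= p10).
  { apply Hmin; [lra |].
    apply q1_eq0_of_not_preferred; lra. }
  split; [exact Hpbar_le |].
  intros A3.
  enough (y - pbar <= y - p10) by lra.
  apply (le_of_incr_nonneg U1 U1_incr); [exact Hp10 |].
  rewrite Hindiff.
  exact (not_preferred_of_q1_eq0 U0 U1 G y pbar (A3 pbar) Hqpbar).
Qed.
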